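(* Let $E,F$ be effect algebras and let $[E,F]$ denote the set of all generalized effect algebra homomorphisms $E\to F$ (maps $f$ with $f(0)=0$ such that $a\perp b$ implies $f(a)\perp f(b)$ and $f(a\oplus b)=f(a)\oplus f(b)$). For $f,g\in[E,F]$: (i) if $f(a)\perp g(a)$ for all $a\in E$, then the pointwise orthosum $f\oplus g\colon a\mapsto f(a)\oplus g(a)$ belongs to $[E,F]$; (ii) if $f\leq g$ pointwise, then the pointwise difference $g\ominus f\colon a\mapsto g(a)\ominus f(a)$ belongs to $[E,F]$. Consequently, $[E,F]$ with the pointwise partial operation $\oplus$ and the zero map as $0$ is a generalized effect algebra whose algebraic ordering ($f\le g$ iff $g=f\oplus k$ for some $k\in[E,F]$) coincides with the pointwise ordering.
   Context: An effect algebra is a partial algebra $(E;\oplus,',0,1)$ with $\oplus$ commutative and associative (as Kleene identities), $a\oplus b=1$ iff $b=a'$, and $a\oplus 1$ defined iff $a=0$. Write $a\perp b$ if $a\oplus b$ is defined; $a\le b$ iff $a\oplus c=b$ for some $c$; $b\ominus a$ denotes the unique such $c$ (cancellation holds). A generalized effect algebra is a partial commutative monoid $(E;\oplus,0)$ satisfying cancellation ($a\oplus b=a\oplus c\Rightarrow b=c$) and positivity ($a\oplus b=0\Rightarrow a=0$). *)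

From Stdlib Require Import ClassicalEpsilon.

Definition kbind {T : Type} (x : option T) (f : T -> option T) : option T :=
  match x with Some y => f y | None => None end.

(* Kleene associativity identity: (a (+) b) (+) c = a (+) (b (+) c), both sides
   defined and equal, or both undefined. *)
Definition kleene_assoc {T : Type} (op : T -> T -> option T) : Prop :=
  forall a b c, kbind (op a b) (fun ab => op ab c) = kbind (op b c) (fun bc => op a bc).

Record effect_algebra := EffectAlgebra {
  ea_car :> Type;
  ea_oplus : ea_car -> ea_car -> option ea_car;
  ea_compl : ea_car -> ea_car;
  ea_zero : ea_car;
  ea_one : ea_car;
  ea_comm : forall a b, ea_oplus a b = ea_oplus b a;
  ea_assoc : kleene_assoc ea_oplus;
  ea_ortho : forall a b, ea_oplus a b = Some ea_one <-> b = ea_compl a;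
  ea_zero_one : forall a, ea_oplus a ea_one <> None <-> a = ea_zero
}.

Arguments ea_oplus {e}.
Arguments ea_compl {e}.
Arguments ea_zero {e}.
Arguments ea_one {e}.

Definition ea_perp {E : effect_algebra} (a b : E) : Prop := ea_oplus a b <> None.

Definition ea_le {E : effect_algebra} (a b : E) : Prop := exists c, ea_oplus a c = Some b.

Definition is_gea {T : Type} (op : T -> T -> option T) (z : T) : Prop :=
  (forall a b, op a b = op b a) /\
  kleene_assoc op /\
  (forall a, op a z = Some a) /\
  (forall a b c x, op a b = Some x -> op a c = Some x -> b = c) /\
  (forall a b, op a b = Some z -> a = z).

Definition is_gea_hom {E F : effect_algebra} (f : E -> F) : Prop :=
  f ea_zero = ea_zero /\
  forall a b ab, ea_oplus a b = Some ab -> ea_oplus (f a) (f b) = Some (f ab).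

Definition hom_set (E F : effect_algebra) : Type := { f : E -> F | is_gea_hom f }.

(* pointwise partial operation on [E,F]: f (+) g is the element h of [E,F] with
   h a = f a (+) g a for all a, when such an element exists; undefined otherwise.
   (The theorem shows it is defined exactly when f, g are pointwise orthogonal.) *)
Definition hom_oplus {E F : effect_algebra} (f g : hom_set E F) : option (hom_set E F) :=
  match excluded_middle_informative
          (exists h : hom_set E F, forall a, ea_oplus (proj1_sig f a) (proj1_sig g a) = Some (proj1_sig h a))
  with
  | left e => Some (proj1_sig (constructive_indefinite_description _ e))
  | right _ => None
  end.

From Stdlib Require Import ClassicalEpsilon FunctionalExtensionality ProofIrrelevance.

(* The orthosum of two homomorphisms is additive because [(f a (+) g a) (+) (f b (+) g b)]
   can be regrouped as [(f a (+) f b) (+) (g a (+) g b) = f (a (+) b) (+) g (a (+) b)];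
   the difference is additive by the same regrouping followed by cancellation.  Since the operation on [E, F] is the pointwise one, the
   generalized effect algebra axioms of [E, F] are inherited pointwise from [F], the
   only non-pointwise step being that a pointwise orthogonal pair of homomorphisms has
   an orthosum in [E, F], which is (i). *)

Lemma kleene_assocP {T : Type} (op : T -> T -> option T) :
  (forall a b, op a b = op b a) ->
  (forall a b c ab r, op a b = Some ab -> op ab c = Some r ->
     exists bc, op b c = Some bc /\ op a bc = Some r) ->
  kleene_assoc op.
Proof.
  intros opC assoc_l.
  assert (assoc_r : forall a b c bc r, op b c = Some bc -> op a bc = Some r ->
            exists ab, op a b = Some ab /\ op ab c = Some r).
  { intros a b c bc r Hbc Hr. rewrite opC in Hbc, Hr.
    destruct (assoc_l _ _ _ _ _ Hbc Hr) as [ba [Hba Hr']].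
    exists ba. split; rewrite opC; tauto. }
  intros a b c; unfold kbind.
  destruct (op a b) as [ab|] eqn:Hab, (op b c) as [bc|] eqn:Hbc.
  - destruct (op ab c) as [r|] eqn:Hr.
    + destruct (assoc_l _ _ _ _ _ Hab Hr) as [bc' [Hbc' Hr']].
      congruence.
    + destruct (op a bc) as [r|] eqn:Hr'; [|reflexivity].
      destruct (assoc_r _ _ _ _ _ Hbc Hr') as [ab' [Hab' Hr'']].
      congruence.
  - destruct (op ab c) as [r|] eqn:Hr; [|reflexivity].
    destruct (assoc_l _ _ _ _ _ Hab Hr) as [bc' [Hbc' _]]. congruence.
  - destruct (op a bc) as [r|] eqn:Hr; [|reflexivity].
    destruct (assoc_r _ _ _ _ _ Hbc Hr) as [ab' [Hab' _]]. congruence.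
  - reflexivity.
Qed.

Section EffectAlgebra.

Variable E : effect_algebra.
Implicit Types a b c d x : E.

Lemma oplus_assoc_l a b c ab r :
  ea_oplus a b = Some ab -> ea_oplus ab c = Some r ->
  exists bc, ea_oplus b c = Some bc /\ ea_oplus a bc = Some r.
Proof.
  intros Hab Hr. pose proof (ea_assoc E a b c) as H. unfold kbind in H.
  rewrite Hab, Hr in H. destruct (ea_oplus b c); [eauto | discriminate].
Qed.

Lemma oplus_assoc_r a b c bc r :
  ea_oplus b c = Some bc -> ea_oplus a bc = Some r ->
  exists ab, ea_oplus a b = Some ab /\ ea_oplus ab c = Some r.
Proof.
  intros Hbc Hr. pose proof (ea_assoc E a b c) as H. unfold kbind in H.
  rewrite Hbc, Hr in H. destruct (ea_oplus a b); [eauto | discriminate].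
Qed.

Lemma oplusACA a b c d ab cd r :
  ea_oplus a b = Some ab -> ea_oplus c d = Some cd -> ea_oplus ab cd = Some r ->
  exists ac bd, ea_oplus a c = Some ac /\ ea_oplus b d = Some bd /\
                ea_oplus ac bd = Some r.
Proof.
  intros Hab Hcd Hr.
  destruct (oplus_assoc_l _ _ _ _ _ Hab Hr) as [bcd [Hbcd Hr1]].
  destruct (oplus_assoc_r _ _ _ _ _ Hcd Hbcd) as [bc [Hbc Hr2]].
  destruct (oplus_assoc_r _ _ _ _ _ Hr2 Hr1) as [abc [Habc Hr3]].
  rewrite ea_comm in Hbc.
  destruct (oplus_assoc_r _ _ _ _ _ Hbc Habc) as [ac [Hac Hr4]].
  destruct (oplus_assoc_l _ _ _ _ _ Hr4 Hr3) as [bd [Hbd Hr5]].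
  eauto.
Qed.

Lemma oplus_eq_one_compl a b : ea_oplus a b = Some ea_one -> a = ea_compl b.
Proof. rewrite ea_comm. apply ea_ortho. Qed.

Lemma complK a : ea_compl (ea_compl a) = a.
Proof.
  symmetry. apply oplus_eq_one_compl. apply ea_ortho. reflexivity.
Qed.

Lemma compl_one : ea_compl (@ea_one E) = ea_zero.
Proof.
  apply ea_zero_one. rewrite ea_comm, (proj2 (ea_ortho E _ _) eq_refl).
  discriminate.
Qed.

Lemma oplus0 a : ea_oplus a ea_zero = Some a.
Proof.
  assert (Hone : ea_oplus ea_one ea_zero = Some (@ea_one E))
    by (apply ea_ortho; symmetry; apply compl_one).
  assert (Ha : ea_oplus (ea_compl a) a = Some ea_one)
    by (apply ea_ortho; symmetry; apply complK).
  destruct (oplus_assoc_l _ _ _ _ _ Ha Hone) as [a0 [Ha0 Hone']].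
  apply ea_ortho in Hone'. rewrite complK in Hone'. congruence.
Qed.

Lemma oplus_eq0 a b : ea_oplus a b = Some ea_zero -> a = ea_zero.
Proof.
  intros Hab.
  assert (Hone : ea_oplus ea_zero ea_one = Some (@ea_one E))
    by (rewrite ea_comm; apply oplus0).
  destruct (oplus_assoc_l _ _ _ _ _ Hab Hone) as [b1 [Hb1 _]].
  assert (Hb : b = ea_zero) by (apply ea_zero_one; congruence).
  rewrite Hb, oplus0 in Hab. congruence.
Qed.

Lemma oplus_compl_sum a b x : ea_oplus a b = Some x ->
  exists m, ea_oplus (ea_compl x) a = Some m /\ b = ea_compl m.
Proof.
  intros Hab. rewrite ea_comm in Hab.
  assert (Hx : ea_oplus x (ea_compl x) = Some ea_one) by (apply ea_ortho; reflexivity).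
  destruct (oplus_assoc_l _ _ _ _ _ Hab Hx) as [m [Hm Hone]].
  exists m. rewrite ea_comm. auto using oplus_eq_one_compl.
Qed.

Lemma oplus_cancel a b c x :
  ea_oplus a b = Some x -> ea_oplus a c = Some x -> b = c.
Proof.
  intros Hb Hc.
  destruct (oplus_compl_sum _ _ _ Hb) as [m [Hm ->]].
  destruct (oplus_compl_sum _ _ _ Hc) as [n [Hn ->]].
  congruence.
Qed.

End EffectAlgebra.

Section Homomorphisms.

Variables E F : effect_algebra.
Implicit Types f g h : E -> F.

Lemma orthosum_is_gea_hom f g h : is_gea_hom f -> is_gea_hom g ->
  (forall a, ea_oplus (f a) (g a) = Some (h a)) -> is_gea_hom h.
Proof.
  intros [f0 fD] [g0 gD] Hh. split.
  - pose proof (Hh ea_zero) as H0. rewrite f0, g0, oplus0 in H0. congruence.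
  - intros a b ab Hab.
    destruct (oplusACA _ _ _ _ _ _ _ _ (fD _ _ _ Hab) (gD _ _ _ Hab) (Hh ab))
      as [ha [hb [Ha [Hb Hr]]]].
    rewrite Hh in Ha, Hb. congruence.
Qed.

Lemma difference_is_gea_hom f g h : is_gea_hom f -> is_gea_hom g ->
  (forall a, ea_oplus (f a) (h a) = Some (g a)) -> is_gea_hom h.
Proof.
  intros [f0 fD] [g0 gD] Hh. split.
  - pose proof (Hh ea_zero) as H0. rewrite f0, g0, ea_comm in H0.
    eapply oplus_eq0; eauto.
  - intros a b ab Hab.
    destruct (oplusACA _ _ _ _ _ _ _ _ (Hh a) (Hh b) (gD _ _ _ Hab))
      as [fab [hab [Hf [Hhab Hr]]]].
    rewrite (fD _ _ _ Hab) in Hf. injection Hf as <-.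
    rewrite Hhab. f_equal. eapply oplus_cancel; [exact Hr | exact (Hh ab)].
Qed.

Lemma gea_hom_orthosum f g : is_gea_hom f -> is_gea_hom g ->
  (forall a, ea_perp (f a) (g a)) ->
  exists h, (forall a, ea_oplus (f a) (g a) = Some (h a)) /\ is_gea_hom h.
Proof.
  intros Hf Hg Hperp.
  destruct (choice (fun a y => ea_oplus (f a) (g a) = Some y)) as [h Hh].
  { intros a. specialize (Hperp a). unfold ea_perp in Hperp.
    destruct (ea_oplus (f a) (g a)); [eauto | contradiction]. }
  eauto using orthosum_is_gea_hom.
Qed.

Lemma gea_hom_difference f g : is_gea_hom f -> is_gea_hom g ->
  (forall a, ea_le (f a) (g a)) ->
  exists h, (forall a, ea_oplus (f a) (h a) = Some (g a)) /\ is_gea_hom h.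
Proof.
  intros Hf Hg Hle.
  destruct (choice (fun a y => ea_oplus (f a) y = Some (g a)) Hle) as [h Hh].
  eauto using difference_is_gea_hom.
Qed.

Lemma hom_set_eq (f g : hom_set E F) :
  (forall a, proj1_sig f a = proj1_sig g a) -> f = g.
Proof.
  destruct f as [f Hf], g as [g Hg]; simpl; intros Hfg.
  apply functional_extensionality in Hfg. subst g.
  f_equal. apply proof_irrelevance.
Qed.

Lemma hom_oplus_Some (f g h : hom_set E F) :
  hom_oplus f g = Some h <->
  forall a, ea_oplus (proj1_sig f a) (proj1_sig g a) = Some (proj1_sig h a).
Proof.
  unfold hom_oplus. destruct excluded_middle_informative as [Hex|Hnex].
  - destruct (constructive_indefinite_description _ Hex) as [h' Hh']; simpl.
    split.
    + intros H; injection H as <-; auto.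
    + intros Hh. f_equal. apply hom_set_eq. intros a.
      specialize (Hh a). rewrite Hh' in Hh. congruence.
  - split; [discriminate|]. intros Hh. exfalso. eauto.
Qed.

Lemma hom_oplus_defined (f g : hom_set E F) :
  hom_oplus f g <> None <-> forall a, ea_perp (proj1_sig f a) (proj1_sig g a).
Proof.
  split.
  - intros Hdef a. destruct (hom_oplus f g) as [h|] eqn:Hh; [|congruence].
    rewrite hom_oplus_Some in Hh. unfold ea_perp. rewrite (Hh a). discriminate.
  - intros Hperp.
    destruct (gea_hom_orthosum _ _ (proj2_sig f) (proj2_sig g) Hperp) as [h [Hh Hhom]].
    replace (hom_oplus f g) with (Some (exist _ h Hhom : hom_set E F)).
    + discriminate.
    + symmetry. apply hom_oplus_Some. exact Hh.
Qed.

Lemma hom_oplusC (f g : hom_set E F) : hom_oplus f g = hom_oplus g f.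
Proof.
  assert (Hsym : forall f g h : hom_set E F,
            hom_oplus f g = Some h -> hom_oplus g f = Some h).
  { intros f' g' h. rewrite !hom_oplus_Some. intros Hh a. rewrite ea_comm. auto. }
  destruct (hom_oplus f g) as [h|] eqn:Hfg.
  - symmetry. auto.
  - destruct (hom_oplus g f) as [h|] eqn:Hgf; [|reflexivity].
    apply Hsym in Hgf. congruence.
Qed.

Lemma hom_oplus_assoc_l (f g k fg r : hom_set E F) :
  hom_oplus f g = Some fg -> hom_oplus fg k = Some r ->
  exists gk, hom_oplus g k = Some gk /\ hom_oplus f gk = Some r.
Proof.
  rewrite !hom_oplus_Some. intros Hfg Hr.
  assert (Hgk : hom_oplus g k <> None).
  { apply hom_oplus_defined. intros a.
    destruct (oplus_assoc_l _ _ _ _ _ _ (Hfg a) (Hr a)) as [gka [Hgka _]].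
    unfold ea_perp. congruence. }
  destruct (hom_oplus g k) as [gk|] eqn:Hgk'; [|contradiction].
  exists gk. split; [reflexivity|].
  rewrite hom_oplus_Some in Hgk' |- *. intros a.
  destruct (oplus_assoc_l _ _ _ _ _ _ (Hfg a) (Hr a)) as [gka [Hgka Hra]].
  rewrite Hgk' in Hgka. congruence.
Qed.

Definition zero_hom : hom_set E F :=
  exist _ (fun _ => ea_zero) (conj eq_refl (fun _ _ _ _ => oplus0 F ea_zero)).

Lemma hom_set_is_gea : is_gea (@hom_oplus E F) zero_hom.
Proof.
  split; [exact hom_oplusC|]. split.
  { apply kleene_assocP; [exact hom_oplusC | exact hom_oplus_assoc_l]. }
  split.
  { intros f. apply hom_oplus_Some. intros a. apply oplus0. }
  split.
  - intros f g k x. rewrite !hom_oplus_Some. intros Hg Hk.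
    apply hom_set_eq. intros a. eapply oplus_cancel; eauto.
  - intros f g. rewrite hom_oplus_Some. intros Hfg.
    apply hom_set_eq. intros a. eapply oplus_eq0; eauto.
Qed.

Lemma hom_le_pointwise (f g : hom_set E F) :
  (exists k : hom_set E F, hom_oplus f k = Some g) <->
  (forall a, ea_le (proj1_sig f a) (proj1_sig g a)).
Proof.
  split.
  - intros [k Hk] a. rewrite hom_oplus_Some in Hk. exists (proj1_sig k a). auto.
  - intros Hle.
    destruct (gea_hom_difference _ _ (proj2_sig f) (proj2_sig g) Hle) as [k [Hk Hhom]].
    exists (exist _ k Hhom). apply hom_oplus_Some. exact Hk.
Qed.

End Homomorphisms.

Theorem lemma3p1 (E F : effect_algebra) :
  (* (i) pointwise orthosum *)
  (forall f g : E -> F, is_gea_hom f -> is_gea_hom g ->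
     (forall a, ea_perp (f a) (g a)) ->
     exists h : E -> F, (forall a, ea_oplus (f a) (g a) = Some (h a)) /\ is_gea_hom h) /\
  (* (ii) pointwise difference g (-) f : the unique c with f a (+) c = g a *)
  (forall f g : E -> F, is_gea_hom f -> is_gea_hom g ->
     (forall a, ea_le (f a) (g a)) ->
     exists h : E -> F, (forall a, ea_oplus (f a) (h a) = Some (g a)) /\ is_gea_hom h) /\
  (* the operation on [E,F] is the pointwise one *)
  (forall f g : hom_set E F,
     (hom_oplus f g <> None <->
        forall a, ea_perp (proj1_sig f a) (proj1_sig g a)) /\
     (forall h, hom_oplus f g = Some h ->
        forall a, ea_oplus (proj1_sig f a) (proj1_sig g a) = Some (proj1_sig h a))) /\
  (* [E,F] with zero map is a GEA, with algebraic order = pointwise order *)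
  (exists z : hom_set E F,
     (forall a, proj1_sig z a = ea_zero) /\
     is_gea (@hom_oplus E F) z /\
     (forall f g : hom_set E F,
        (exists k : hom_set E F, hom_oplus f k = Some g) <->
        (forall a, ea_le (proj1_sig f a) (proj1_sig g a)))).
Proof.
  split; [exact (gea_hom_orthosum E F)|].
  split; [exact (gea_hom_difference E F)|].
  split.
  - intros f g. split; [apply hom_oplus_defined|].
    intros h. apply hom_oplus_Some.
  - exists (zero_hom E F). split; [reflexivity|].
    split; [apply hom_set_is_gea | apply hom_le_pointwise].
Qed.
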